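(* Let $(Z^n_k)_{n\in\mathbb N,1\le k\le n}$ be a triangular array of nonnegative, uniformly integrable random variables such that for each $n\in\mathbb N$ the random variables $Z^n_1,\dots,Z^n_n$ are pairwise uncorrelated. Then $\frac1n\sum_{k=1}^n(Z^n_k-EZ^n_k)\to0$ in probability as $n\to\infty$.
   Context: Random variables are only assumed integrable (no finite second moments are assumed); ''pairwise uncorrelated'' means $E[Z^n_kZ^n_l]=E[Z^n_k]E[Z^n_l]$ for $k\ne l$ (with the product integrable). *)

From HB Require Import structures.
From mathcomp Require Import all_boot all_order all_algebra.
From mathcomp Require Import all_classical all_reals all_analysis.
Set Implicit Arguments. Unset Strict Implicit. Unset Printing Implicit Defensive.
Import Order.TTheory GRing.Theory Num.Theory.
Import numFieldNormedType.Exports.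
Local Open Scope classical_set_scope.
Local Open Scope ring_scope.

Definition uniformly_integrable d (T : measurableType d) (R : realType)
  (P : probability T R) (I : Type) (A : set I) (F : I -> T -> R) : Prop :=
  (forall i, A i -> P.-integrable setT (EFin \o F i)) /\
  (forall eps : R, 0 < eps -> exists M : R, forall M', M <= M' ->
     forall i, A i ->
       (\int[P]_(x in [set x | (M' < `|F i x|)%R]) (`|F i x|)%:E <= eps%:E)%E).

Definition pairwise_uncorrelated d (T : measurableType d) (R : realType)
  (P : probability T R) (I : Type) (A : set I) (X : I -> T -> R) : Prop :=
  forall k l, A k -> A l -> k <> l ->
    P.-integrable setT (EFin \o (X k \* X l)) /\
    ('E_P[X k \* X l] = 'E_P[X k] * 'E_P[X l])%E.

Definition cvg_in_probability_to0 d (T : measurableType d) (R : realType)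
  (P : probability T R) (Y : nat -> T -> R) : Prop :=
  forall eps : R, 0 < eps ->
    P [set x | eps <= `|Y n x|] @[n --> \oo] --> 0%E.

From HB Require Import structures.
From mathcomp Require Import all_boot all_order all_algebra.
From mathcomp Require Import all_classical all_reals all_analysis.
From mathcomp Require Import measurable_realfun.
From mathcomp Require Import ring lra.
Import Order.TTheory GRing.Theory Num.Theory.
Import numFieldNormedType.Exports.
Local Open Scope classical_set_scope.
Local Open Scope ring_scope.
Set Implicit Arguments. Unset Strict Implicit. Unset Printing Implicit Defensive.

(* Truncate at a level M: with T_k = min(Z_k, M), uniform integrability makes
   E Z_k - E T_k <= δ for every k and bounds all the E Z_k by one constant C.
   The centred average splits as
     avg (T_k - E T_k) + avg (Z_k - T_k) - avg (E Z_k - E T_k).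
   The last term lies in [0, δ]; the middle one is nonnegative with mean at
   most δ, so Markov's inequality controls it.  For the first one, Z_k Z_l >=
   T_k T_l and uncorrelatedness give
     Cov(T_k, T_l) <= E Z_k E Z_l - E T_k E T_l <= 2 C δ   for k <> l,
   while Cov(T_k, T_k) <= M^2, so Chebyshev's inequality bounds its deviation
   probability by O(M^2 / n + C δ).  Let n -> oo, then δ -> 0. *)

Lemma avg_nat_ge (R : numFieldType) (n : nat) (F : nat -> R) (a : R) :
  (0 < n)%N ->
  (forall k, (1 <= k <= n)%N -> a <= F k) ->
  a <= n%:R^-1 * \sum_(1 <= k < n.+1) F k.
Proof.
move=> n0 aF; rewrite ler_pdivlMl ?ltr0n// mulr_natl.
by have := @ler_sum_nat _ 1 n.+1 (fun _ => a) F aF; rewrite sumr_const_nat subn1.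
Qed.

Lemma avg_nat_le (R : numFieldType) (n : nat) (F : nat -> R) (a : R) :
  (0 < n)%N ->
  (forall k, (1 <= k <= n)%N -> F k <= a) ->
  n%:R^-1 * \sum_(1 <= k < n.+1) F k <= a.
Proof.
move=> n0 Fa; rewrite ler_pdivrMl ?ltr0n// mulr_natl.
by have := @ler_sum_nat _ 1 n.+1 F (fun _ => a) Fa; rewrite sumr_const_nat subn1.
Qed.

Lemma double_sum_nat_le (R : numDomainType) (n : nat) (c : nat -> nat -> R)
    (v w : R) :
  0 <= w ->
  (forall k, (1 <= k <= n)%N -> c k k <= v) ->
  (forall k l, (1 <= k <= n)%N -> (1 <= l <= n)%N -> k <> l -> c k l <= w) ->
  \sum_(1 <= k < n.+1) \sum_(1 <= l < n.+1) c k l <= n%:R * v + n%:R ^+ 2 * w.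
Proof.
move=> w0 cv cw.
have row k : (1 <= k <= n)%N -> \sum_(1 <= l < n.+1) c k l <= v + n%:R * w.
  move=> hk.
  apply: (@le_trans _ _ (\sum_(1 <= l < n.+1) ((if l == k then v else 0) + w))).
    apply: ler_sum_nat => l hl; case: eqP => [->|/nesym lk].
      by rewrite -[c k k]addr0 lerD ?cv.
    by rewrite add0r cw.
  rewrite big_split sumr_const_nat subn1 mulr_natl lerD2r.
  rewrite (bigD1_seq k) ?mem_index_iota ?ltnS ?iota_uniq//= eqxx big1 ?addr0//.
  by move=> l /negbTE ->.
have := @ler_sum_nat _ 1 n.+1 _ (fun _ => v + n%:R * w) row.
rewrite sumr_const_nat subn1 -[(_ + _) *+ _]mulr_natl => /le_trans; apply.
by rewrite mulrDr mulrA -expr2.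
Qed.

Lemma cvge0_of_fine_bound (R : realType) (u : nat -> \bar R) :
  (forall n, u n \is a fin_num) -> (forall n, (0 <= u n)%E) ->
  (forall e : R, 0 < e ->
     exists B : R, forall n, (0 < n)%N -> fine (u n) <= B / n%:R + e) ->
  u n @[n --> \oo] --> 0%E.
Proof.
move=> ufin u0 ubound; apply/fine_cvgP; split; first exact: nearW.
apply/cvgr0Pnorm_le => e e0; have e2 : 0 < e / 2 by lra.
have [B uB] := ubound _ e2.
near=> n; have n0 : (0 < n)%N by near: n; exact: nbhs_infty_gt.
have n0R : 0 < n%:R :> R by rewrite ltr0n.
have Bn : B / n%:R <= e / 2.
  rewrite ler_pdivrMr// -ler_pdivrMl ?divr_gt0//.
  by apply/ltW; near: n; exact: nbhs_infty_gtr.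
rewrite /= ger0_norm ?fine_ge0//; move: (uB n n0); lra.
Unshelve. all: end_near.
Qed.

Section real_expectation.
Context d (T : measurableType d) (R : realType) (P : probability T R).

Lemma measurable_ge_level (f : T -> R) (a : R) : measurable_fun setT f ->
  measurable [set x | a <= f x].
Proof.
move=> mf; rewrite -[X in measurable X]setTI.
exact: (measurable_fun_le _ (measurable_cst a) mf).
Qed.

Lemma measurable_gt_level (f : T -> R) (a : R) : measurable_fun setT f ->
  measurable [set x | a < f x].
Proof.
move=> mf; have -> : [set x | a < f x] = ~` [set x | f x <= a].
  by apply/seteqP; split => x /=; rewrite ltNge => /negP.
rewrite -[X in measurable (~` X)]setTI.
exact/measurableC/(measurable_fun_le _ mf (measurable_cst a)).
Qed.

Lemma Lfun1_measurable (f : T -> R) : f \in Lfun P 1 -> measurable_fun setT f.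
Proof. by move=> /sub_Lfun_mfun; rewrite inE. Qed.

Lemma measurable_avg (n : nat) (F : nat -> T -> R) :
  (forall k, measurable_fun setT (F k)) ->
  measurable_fun setT (fun x => n%:R^-1 * \sum_(1 <= k < n.+1) F k x).
Proof.
by move=> mF; apply: measurable_funM => //; exact: measurable_sum.
Qed.

Lemma bounded_Lfun1 (f : T -> R) (K : R) : measurable_fun setT f ->
  (forall x, `|f x| <= K) -> f \in Lfun P 1.
Proof.
move=> mf fK; apply/Lfun1_integrable; apply: measurable_bounded_integrable => //.
  by rewrite (le_lt_trans (probability_le1 P measurableT))// ltry.
exists K; split; first exact: num_real.
by move=> M KM x _; exact: le_trans (fK x) (ltW KM).
Qed.

Lemma Lfun1_itv (f : T -> R) (M : R) : measurable_fun setT f ->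
  (forall x, 0 <= f x <= M) -> f \in Lfun P 1.
Proof.
move=> mf fM; apply: (bounded_Lfun1 mf (K := M)) => x.
by case/andP: (fM x) => f0 fxM; rewrite ger0_norm.
Qed.

Lemma Lfun1_sum (I : eqType) (r : seq I) (F : I -> T -> R) :
  (forall i, i \in r -> F i \in Lfun P 1) ->
  (fun x => \sum_(i <- r) F i x) \in Lfun P 1.
Proof. by move=> FL; rewrite -fct_sumE big_seq rpred_sum. Qed.

Lemma Lfun1_scale (f : T -> R) (a : R) : f \in Lfun P 1 ->
  (fun x => a * f x) \in Lfun P 1.
Proof.
have -> : (fun x => a * f x) = a \o* f by apply/funext => x /=; rewrite mulrC.
exact: Lfun_scale.
Qed.

Lemma fine_expectation_sum (I : eqType) (r : seq I) (F : I -> T -> R) :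
  (forall i, i \in r -> F i \in Lfun P 1) ->
  fine 'E_P[fun x => \sum_(i <- r) F i x] = \sum_(i <- r) fine 'E_P[F i].
Proof.
move=> FL; rewrite -fct_sumE -(big_map F xpredT id) expectation_sum; last first.
  by move=> _ /mapP[i ir ->]; exact: FL.
rewrite big_map big_seq -sum_fine -?big_seq// => i ir.
exact/expectation_fin_num/FL.
Qed.

Lemma fine_expectationZl (f : T -> R) (a : R) : f \in Lfun P 1 ->
  fine 'E_P[fun x => a * f x] = a * fine 'E_P[f].
Proof.
have -> : (fun x => a * f x) = a \o* f by apply/funext => x /=; rewrite mulrC.
by move=> fL; rewrite expectationZl// fineM// expectation_fin_num.
Qed.

Lemma fine_expectationB (f g : T -> R) : f \in Lfun P 1 -> g \in Lfun P 1 ->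
  fine 'E_P[fun x => f x - g x] = fine 'E_P[f] - fine 'E_P[g].
Proof.
move=> fL gL; rewrite -[fun x => _]/(f \- g) expectationB//.
by rewrite fineB// expectation_fin_num.
Qed.

Lemma fine_expectation_itv (f : T -> R) (M : R) : measurable_fun setT f ->
  (forall x, 0 <= f x <= M) -> 0 <= fine 'E_P[f] <= M.
Proof.
move=> mf fM; have fL := Lfun1_itv mf fM.
have f0 x : 0 <= f x by case/andP: (fM x).
rewrite fine_ge0 ?expectation_ge0//= -[M]/(fine M%:E) -(expectation_cst P M).
apply: fine_le; [exact: expectation_fin_num|by rewrite expectation_cst|].
apply: expectation_le => //; last by apply: aeW => x; case/andP: (fM x).
by move=> x; case/andP: (fM x); exact: le_trans.
Qed.

Lemma markov_fine (f : T -> R) (a : R) : (forall x, 0 <= f x) ->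
  f \in Lfun P 1 -> 0 < a -> a * fine (P [set x | a <= f x]) <= fine 'E_P[f].
Proof.
move=> f0 fL a0; have fm := sub_Lfun_mfun fL.
have := @markov _ _ _ P (mfun_Sub fm) id a a0 (@measurable_id _ _ _)
  (fun r h => h) (fun x y _ _ h => h).
rewrite !mfun_valP /=.
have -> : [set x | (a%:E <= `|(f x)%:E|)%E] = [set x | a <= f x].
  by apply/seteqP; split => x /=; rewrite lee_fin ger0_norm.
have -> : id \o Num.norm \o f = f by apply/funext => x /=; rewrite ger0_norm.
have mS : measurable [set x | a <= f x].
  exact/measurable_ge_level/Lfun1_measurable.
move=> h; rewrite -[a in a * _]/(fine a%:E) -fineM ?fin_num_measure//.
apply: fine_le => //; first by rewrite fin_numM ?fin_num_measure.
exact: expectation_fin_num.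
Qed.

Lemma markov_sqr_fine (f : T -> R) (a : R) : measurable_fun setT f ->
  (fun x => f x ^+ 2) \in Lfun P 1 -> 0 < a ->
  a ^+ 2 * fine (P [set x | a <= `|f x|]) <= fine 'E_P[fun x => f x ^+ 2].
Proof.
move=> mf fL a0; have fm : f \in mfun by rewrite inE.
have := @markov _ _ _ P (mfun_Sub fm) (fun r => r ^+ 2) a a0
  (exprn_measurable _) (fun r _ => sqr_ge0 r).
have /[swap]/[apply] :
    {in Num.nneg &, {homo (fun r : R => r ^+ 2) : x y / x <= y}}.
  by move=> x y; rewrite !nnegrE => x0 y0; rewrite ler_sqr.
rewrite !mfun_valP /=.
have -> : [set x | (a%:E <= `|(f x)%:E|)%E] = [set x | a <= `|f x|].
  by apply/seteqP; split => x /=; rewrite lee_fin.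
have -> : (fun r => r ^+ 2) \o Num.norm \o f = (fun x => f x ^+ 2).
  by apply/funext => x /=; rewrite real_normK// num_real.
have mS : measurable [set x | a <= `|f x|].
  exact/measurable_ge_level/measurableT_comp.
move=> h; rewrite -[X in X * _]/(fine (a ^+ 2)%:E) -fineM ?fin_num_measure//.
apply: fine_le => //; first by rewrite fin_numM ?fin_num_measure.
exact: expectation_fin_num.
Qed.

Lemma centered_norm_le (f : T -> R) (M : R) : measurable_fun setT f ->
  (forall x, 0 <= f x <= M) -> forall x, `|f x - fine 'E_P[f]| <= M.
Proof.
move=> mf fM x; case/andP: (fM x) => f0 fxM.
case/andP: (fine_expectation_itv mf fM) => E0 EM.
by rewrite ler_norml; apply/andP; split; lra.
Qed.

Lemma covariance_itv_le (f : T -> R) (M : R) : measurable_fun setT f ->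
  (forall x, 0 <= f x <= M) -> fine (covariance P f f) <= M ^+ 2.
Proof.
move=> mf fM; rewrite covariance.unlock.
set g := fun x => f x - fine 'E_P[f].
have mg : measurable_fun setT (fun x => g x * g x).
  by apply: measurable_funM; apply: measurable_funB => //; exact: measurable_cst.
suff /andP[] : 0 <= fine 'E_P[fun x => g x * g x] <= M ^+ 2 by [].
apply: fine_expectation_itv => // x.
rewrite -expr2 sqr_ge0 /= -real_normK ?num_real// lerXn2r ?nnegrE//.
- exact: le_trans (normr_ge0 _) (centered_norm_le mf fM x).
- exact: centered_norm_le.
Qed.

Lemma fine_expectation_sqr_avg (n : nat) (X : nat -> T -> R) (M : R) :
  (forall k, measurable_fun setT (X k)) ->
  (forall k, (1 <= k <= n)%N -> forall x, 0 <= X k x <= M) ->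
  let Y x := n%:R^-1 * \sum_(1 <= k < n.+1) (X k x - fine 'E_P[X k]) in
  (fun x => Y x ^+ 2) \in Lfun P 1 /\
  fine 'E_P[fun x => Y x ^+ 2] =
    n%:R^-1 ^+ 2 * \sum_(1 <= k < n.+1) \sum_(1 <= l < n.+1)
      fine (covariance P (X k) (X l)).
Proof.
move=> mX XM Y.
have inr k : k \in index_iota 1 n.+1 -> (1 <= k <= n)%N.
  by rewrite mem_index_iota ltnS.
pose c k l x := (X k x - fine 'E_P[X k]) * (X l x - fine 'E_P[X l]).
have cL k l : k \in index_iota 1 n.+1 -> l \in index_iota 1 n.+1 ->
    c k l \in Lfun P 1.
  move=> /inr hk /inr hl; apply: (@bounded_Lfun1 _ (M * M)).
    by apply: measurable_funM;
      apply: measurable_funB.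
  move=> x; rewrite normrM.
  by apply: ler_pM => //; exact: centered_norm_le (mX _) (XM _ _) x.
have -> : (fun x => Y x ^+ 2) =
    (fun x => n%:R^-1 ^+ 2 * \sum_(1 <= k < n.+1) \sum_(1 <= l < n.+1) c k l x).
  by apply/funext => x; rewrite /Y exprMn [X in _ * X]expr2 big_distrlr.
have rowL k : k \in index_iota 1 n.+1 ->
    (fun x => \sum_(1 <= l < n.+1) c k l x) \in Lfun P 1.
  by move=> hk; apply: Lfun1_sum => l; exact: cL hk.
split; first by apply/Lfun1_scale/Lfun1_sum.
rewrite fine_expectationZl; last exact: Lfun1_sum.
rewrite fine_expectation_sum//; congr (_ * _); apply: eq_big_seq => k hk.
rewrite fine_expectation_sum; last by move=> l; apply: cL.
by apply: eq_big_seq => l hl; rewrite covariance.unlock.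
Qed.

Lemma chebyshev_avg (n : nat) (X : nat -> T -> R) (M a : R) : 0 < a ->
  (forall k, measurable_fun setT (X k)) ->
  (forall k, (1 <= k <= n)%N -> forall x, 0 <= X k x <= M) ->
  a ^+ 2 * fine (P [set x | a <= `|n%:R^-1 *
                   \sum_(1 <= k < n.+1) (X k x - fine 'E_P[X k])|]) <=
  n%:R^-1 ^+ 2 * \sum_(1 <= k < n.+1) \sum_(1 <= l < n.+1)
    fine (covariance P (X k) (X l)).
Proof.
move=> a0 mX XM; have [YL <-] := fine_expectation_sqr_avg mX XM.
apply: markov_sqr_fine => //; apply: measurable_avg => k.
exact: measurable_funB.
Qed.

Lemma fine_expectation_min_gap (f : T -> R) (M δ : R) :
  (forall x, 0 <= f x) -> f \in Lfun P 1 -> 0 <= M ->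
  (\int[P]_(x in [set x | (M < `|f x|)%R]) (`|f x|)%:E <= δ%:E)%E ->
  0 <= fine 'E_P[f] - fine 'E_P[fun x => Num.min (f x) M] <= δ.
Proof.
move=> f0 fL M0 tail; have mf := Lfun1_measurable fL.
set g := fun x => Num.min (f x) M.
have mg : measurable_fun setT g by exact: measurable_minr.
have gL : g \in Lfun P 1.
  by apply: (Lfun1_itv (M := M) mg) => x; rewrite le_min f0 M0 ge_min lexx orbT.
have gap0 x : 0 <= f x - g x by rewrite subr_ge0 ge_min lexx.
rewrite -fine_expectationB// fine_ge0 ?expectation_ge0//=.
rewrite -[δ]/(fine δ%:E) fine_le ?expectation_fin_num ?rpredB//.
set D := [set x | M < `|f x|].
have mD : measurable D by apply: measurable_gt_level; exact: measurableT_comp.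
have -> : ('E_P[fun x => (f x - g x)%R] = \int[P]_(x in D) (f x - g x)%:E)%E.
  rewrite unlock [RHS]integral_mkcond; apply: eq_integral => x _; rewrite patchE.
  case: ifPn => // /negP xD; congr EFin.
  have fM : f x <= M.
    by rewrite leNgt; apply/negP => fM; apply: xD; rewrite inE /D /= ger0_norm.
  by rewrite /g min_l// subrr.
apply: le_trans tail; apply: ge0_le_integral => //.
- by move=> x _; rewrite lee_fin.
- apply/measurable_EFinP.
  exact: measurable_funS (measurable_funB mf mg).
- apply/measurable_EFinP.
  exact: measurable_funS (measurableT_comp _ mf).
- by move=> x _; rewrite lee_fin ger0_norm// lerBlDr lerDl le_min f0.
Qed.

Lemma expectation_min_mul_le (f g : T -> R) (M : R) :
  measurable_fun setT f -> measurable_fun setT g ->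
  (forall x, 0 <= f x) -> (forall x, 0 <= g x) -> 0 <= M ->
  ('E_P[fun x => (Num.min (f x) M * Num.min (g x) M)%R] <= 'E_P[f \* g])%E.
Proof.
move=> mf mg f0 g0 M0; have min0 h x : 0 <= h x -> 0 <= Num.min (h x) M.
  by move=> h0; rewrite le_min h0.
apply: expectation_le.
- by apply: measurable_funM; exact: measurable_minr.
- exact: measurable_funM.
- by move=> x; rewrite mulr_ge0 ?min0.
- by move=> x; exact: mulr_ge0.
by apply: aeW => x /=; rewrite ler_pM ?min0 ?ge_min ?lexx.
Qed.

Lemma covariance_min_le (f g : T -> R) (M C δ : R) :
  (forall x, 0 <= f x) -> (forall x, 0 <= g x) ->
  f \in Lfun P 1 -> g \in Lfun P 1 -> 0 <= M ->
  ('E_P[f \* g] = 'E_P[f] * 'E_P[g])%E ->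
  fine 'E_P[f] <= C -> fine 'E_P[g] <= C ->
  0 <= fine 'E_P[f] - fine 'E_P[fun x => Num.min (f x) M] <= δ ->
  0 <= fine 'E_P[g] - fine 'E_P[fun x => Num.min (g x) M] <= δ ->
  fine (covariance P (fun x => Num.min (f x) M) (fun x => Num.min (g x) M))
    <= 2 * C * δ.
Proof.
move=> f0 g0 fL gL M0 uncor fC gC /andP[ff' ff'd] /andP[gg' gg'd].
have mf := Lfun1_measurable fL; have mg := Lfun1_measurable gL.
set f' := fun x => Num.min (f x) M; set g' := fun x => Num.min (g x) M.
have f'M x : 0 <= f' x <= M by rewrite le_min f0 M0 ge_min lexx orbT.
have g'M x : 0 <= g' x <= M by rewrite le_min g0 M0 ge_min lexx orbT.
have mf' : measurable_fun setT f' by exact: measurable_minr.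
have mg' : measurable_fun setT g' by exact: measurable_minr.
have f'L := Lfun1_itv mf' f'M; have g'L := Lfun1_itv mg' g'M.
have f'g'L : (f' * g')%R \in Lfun P 1.
  apply: (Lfun1_itv (M := M * M) (measurable_funM mf' mg')) => x.
  case/andP: (f'M x) => ? ?; case/andP: (g'M x) => ? ?.
  by rewrite mulr_ge0// ler_pM.
have Ef'g' : fine 'E_P[f' * g'] <= fine 'E_P[f] * fine 'E_P[g].
  rewrite -fineM ?expectation_fin_num// -(congr1 fine uncor).
  apply: fine_le; first exact: expectation_fin_num.
    by rewrite uncor fin_numM ?expectation_fin_num.
  exact: expectation_min_mul_le.
rewrite covarianceE// fineB ?fin_numM ?expectation_fin_num//.
rewrite fineM ?expectation_fin_num//.
case/andP: (fine_expectation_itv mg' g'M) => Eg'0 _.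
have Ef0 : 0 <= fine 'E_P[f] by rewrite fine_ge0 ?expectation_ge0.
have h1 : fine 'E_P[f] * (fine 'E_P[g] - fine 'E_P[g']) <= C * δ.
  by rewrite ler_pM.
have h2 : fine 'E_P[g'] * (fine 'E_P[f] - fine 'E_P[f']) <= C * δ.
  by rewrite ler_pM//; lra.
lra.
Qed.

Lemma fine_measure_le_U2 (A B D : set T) :
  measurable A -> measurable B -> measurable D -> A `<=` B `|` D ->
  fine (P A) <= fine (P B) + fine (P D).
Proof.
move=> mA mB mD ABD; rewrite -fineD ?fin_num_measure//.
apply: fine_le; rewrite ?fin_numD ?fin_num_measure//.
apply: le_trans (measureU2 P mB mD).
by apply: le_measure => //; rewrite inE//; exact: measurableU.
Qed.

Lemma uniformly_integrable_mean_le (I : Type) (A : set I) (F : I -> T -> R) :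
  uniformly_integrable P A F -> (forall i, A i -> forall x, 0 <= F i x) ->
  exists2 C : R, 0 <= C & forall i, A i -> fine 'E_P[F i] <= C.
Proof.
move=> [Fint Ftail] F0; have [M HM] := Ftail 1 ltr01.
pose M' := Num.max M 0; have M'0 : 0 <= M' by rewrite le_max lexx orbT.
have MM' : M <= M' by rewrite le_max lexx.
exists (M' + 1) => [|i Ai]; first lra.
have FL : F i \in Lfun P 1 by apply/Lfun1_integrable; exact: Fint.
have /andP[_ gap] := fine_expectation_min_gap (F0 i Ai) FL M'0
  (HM M' MM' i Ai).
have /andP[_ truncM] : 0 <= fine 'E_P[fun x => Num.min (F i x) M'] <= M'.
  apply: fine_expectation_itv.
    by apply: measurable_minr => //; exact: Lfun1_measurable.
  by move=> x; rewrite le_min F0// M'0 ge_min lexx orbT.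
lra.
Qed.
End real_expectation.

Section truncated_average.
Context d (T : measurableType d) (R : realType) (P : probability T R).
Variables (n : nat) (Z : nat -> T -> R) (M C δ : R).
Hypotheses (n_gt0 : (0 < n)%N) (M_ge0 : 0 <= M).
Hypotheses (C_ge0 : 0 <= C) (δ_ge0 : 0 <= δ).
Hypothesis Z_measurable : forall k, measurable_fun setT (Z k).
Hypothesis Z_ge0 : forall k, (1 <= k <= n)%N -> forall x, 0 <= Z k x.
Hypothesis Z_Lfun : forall k, (1 <= k <= n)%N -> Z k \in Lfun P 1.
Hypothesis Z_mean_le : forall k, (1 <= k <= n)%N -> fine 'E_P[Z k] <= C.
Hypothesis Z_tail_le : forall k, (1 <= k <= n)%N ->
  (\int[P]_(x in [set x | (M < `|Z k x|)%R]) (`|Z k x|)%:E <= δ%:E)%E.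
Hypothesis Z_uncorrelated : forall k l,
  (1 <= k <= n)%N -> (1 <= l <= n)%N -> k <> l ->
  ('E_P[Z k \* Z l] = 'E_P[Z k] * 'E_P[Z l])%E.

Local Notation trunc k := (fun x => Num.min (Z k x) M).

Let trunc_itv k : (1 <= k <= n)%N -> forall x, 0 <= trunc k x <= M.
Proof. by move=> hk x; rewrite le_min Z_ge0// M_ge0 ge_min lexx orbT. Qed.

Let trunc_measurable k : measurable_fun setT (trunc k).
Proof. exact: measurable_minr. Qed.

Let trunc_Lfun k : (1 <= k <= n)%N -> trunc k \in Lfun P 1.
Proof. by move=> hk; exact: Lfun1_itv (trunc_measurable k) (trunc_itv hk). Qed.

Let trunc_gap k : (1 <= k <= n)%N ->
  0 <= fine 'E_P[Z k] - fine 'E_P[trunc k] <= δ.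
Proof. by move=> hk; apply: fine_expectation_min_gap; auto. Qed.

Lemma prob_trunc_avg_dev_le (a : R) : 0 < a ->
  a ^+ 2 * fine (P [set x | a <= `|n%:R^-1 *
     \sum_(1 <= k < n.+1) (trunc k x - fine 'E_P[trunc k])|]) <=
  M ^+ 2 / n%:R + 2 * C * δ.
Proof.
move=> a0; apply: le_trans (@chebyshev_avg _ _ _ P n (fun k => trunc k) M a a0
  trunc_measurable trunc_itv) _.
have n0 : 0 < n%:R :> R by rewrite ltr0n.
have -> : M ^+ 2 / n%:R + 2 * C * δ =
    n%:R^-1 ^+ 2 * (n%:R * M ^+ 2 + n%:R ^+ 2 * (2 * C * δ)).
  by field; rewrite gt_eqF.
rewrite ler_wpM2l ?exprn_ge0 ?invr_ge0 ?ler0n//.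
apply: double_sum_nat_le => [|k hk|k l hk hl kl].
- by rewrite !mulr_ge0.
- exact: covariance_itv_le (trunc_itv hk).
- by apply: covariance_min_le; auto.
Qed.

Lemma prob_tail_avg_le (a : R) : 0 < a ->
  a * fine (P [set x | a <= n%:R^-1 * \sum_(1 <= k < n.+1) (Z k x - trunc k x)])
  <= δ.
Proof.
move=> a0; have inr k : k \in index_iota 1 n.+1 -> (1 <= k <= n)%N.
  by rewrite mem_index_iota ltnS.
have diffL k : k \in index_iota 1 n.+1 ->
    (fun x => Z k x - trunc k x) \in Lfun P 1.
  by move=> /inr hk; change (Z k - trunc k \in Lfun P 1); rewrite rpredB; auto.
apply: le_trans (markov_fine _ _ a0) _.
- by move=> x; apply: avg_nat_ge => // k _; rewrite subr_ge0 ge_min lexx.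
- exact/Lfun1_scale/Lfun1_sum.
rewrite fine_expectationZl ?Lfun1_sum// fine_expectation_sum//.
apply: avg_nat_le => // k hk; rewrite fine_expectationB; auto.
by case/andP: (trunc_gap hk).
Qed.

Lemma prob_avg_dev_le (eps : R) : 0 < eps -> δ <= eps / 3 ->
  fine (P [set x | eps <= `|n%:R^-1 *
     \sum_(1 <= k < n.+1) (Z k x - fine 'E_P[Z k])|]) <=
  (3 / eps) ^+ 2 * (M ^+ 2 / n%:R + 2 * C * δ) + 3 / eps * δ.
Proof.
move=> e0 δe; have e3 : 0 < eps / 3 by lra.
set A := fun x => n%:R^-1 * \sum_(1 <= k < n.+1) (trunc k x - fine 'E_P[trunc k]).
set B := fun x => n%:R^-1 * \sum_(1 <= k < n.+1) (Z k x - trunc k x).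
set c := n%:R^-1 * \sum_(1 <= k < n.+1) (fine 'E_P[Z k] - fine 'E_P[trunc k]).
have splitS x : n%:R^-1 * \sum_(1 <= k < n.+1) (Z k x - fine 'E_P[Z k]) =
    A x + B x - c.
  rewrite /A /B /c -mulrDr -mulrBr -big_split -sumrB /=; congr (_ * _).
  by apply: eq_bigr => k _; lra.
have /andP[c0 cδ] : 0 <= c <= δ.
  by rewrite avg_nat_ge ?avg_nat_le// => k hk; case/andP: (trunc_gap hk).
have B0 x : 0 <= B x by apply: avg_nat_ge => // k _; rewrite subr_ge0 ge_min lexx.
have mA : measurable_fun setT A.
  by apply: measurable_avg => k; exact: measurable_funB.
have mB : measurable_fun setT B.
  by apply: measurable_avg => k; exact: measurable_funB.
apply: le_trans (@fine_measure_le_U2 _ _ _ P _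
  [set x | eps / 3 <= `|A x|] [set x | eps / 3 <= B x] _ _ _ _) _.
- apply/measurable_ge_level/measurableT_comp => //.
  by apply: measurable_avg => k; exact: measurable_funB.
- exact/measurable_ge_level/measurableT_comp.
- exact: measurable_ge_level.
- move=> x /=; rewrite splitS => Sx.
  have [|Ax] := leP (eps / 3) `|A x|; first by left.
  have [|Bx] := leP (eps / 3) (B x); first by right.
  have := ler_normD (A x) (B x - c); rewrite addrA.
  have : `|B x - c| <= eps / 3 by rewrite ler_norml; have := B0 x; lra.
  lra.
apply: lerD.
  rewrite -[3 / eps]invf_div exprVn ler_pdivlMl ?exprn_gt0//.
  exact: prob_trunc_avg_dev_le.
by rewrite -[3 / eps]invf_div ler_pdivlMl//; exact: prob_tail_avg_le.
Qed.

End truncated_average.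

Unset Implicit Arguments. Set Strict Implicit. Set Printing Implicit Defensive.

Theorem mainTheorem14 (d : measure_display) (T : measurableType d)
  (R : realType) (P : probability T R) (Z : nat -> nat -> {RV P >-> R}) :
  (forall n k x, (1 <= k <= n)%N -> 0 <= Z n k x) ->
  uniformly_integrable P [set nk : nat * nat | (1 <= nk.2 <= nk.1)%N]
    (fun nk => Z nk.1 nk.2 : T -> R) ->
  (forall n, pairwise_uncorrelated P [set k : nat | (1 <= k <= n)%N]
    (fun k => Z n k : T -> R)) ->
  cvg_in_probability_to0 P
    (fun n x => n%:R^-1 * \sum_(1 <= k < n.+1) (Z n k x - fine 'E_P[Z n k])).
Proof.
move=> Z0 UI uncor eps eps0; have [Zint Ztail] := UI.
have mZ n k : measurable_fun setT (Z n k : T -> R) by exact: measurable_funPT.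
have ZL n k : (1 <= k <= n)%N -> (Z n k : T -> R) \in Lfun P 1.
  by move=> hk; apply/Lfun1_integrable; exact: (Zint (n, k)).
have [C C0 ZC] := uniformly_integrable_mean_le UI
  (fun (nk : nat * nat) hk x => Z0 nk.1 nk.2 x hk).
apply: cvge0_of_fine_bound => [n|n|e e0].
- apply/fin_num_measure/measurable_ge_level/measurableT_comp => //.
  by apply: measurable_avg => k; exact: measurable_funB.
- exact: measure_ge0.
- (* [K] is the coefficient of [δ] in the bound of [prob_avg_dev_le]. *)
  pose K := (3 / eps) ^+ 2 * 2 * C + 3 / eps.
  have e3 : 0 < 3 / eps by rewrite divr_gt0.
  have K0 : 0 < K by rewrite /K; have := sqr_ge0 (3 / eps); nra.
  pose δ := Num.min (eps / 3) (e / K).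
  have δ0 : 0 < δ by rewrite lt_min !divr_gt0.
  have δe : δ <= eps / 3 by rewrite ge_min lexx.
  have δK : δ * K <= e by rewrite -ler_pdivlMr// ge_min lexx orbT.
  have [M HM] := Ztail δ δ0; pose M' := Num.max M 0.
  have M'0 : 0 <= M' by rewrite le_max lexx orbT.
  have MM' : M <= M' by rewrite le_max lexx.
  exists ((3 / eps) ^+ 2 * M' ^+ 2) => n n0.
  have := @prob_avg_dev_le _ _ _ P n (fun k => Z n k) M' C δ n0 M'0 C0 (ltW δ0)
    (mZ n) (fun k hk x => Z0 n k x hk) (ZL n)
    (fun k hk => ZC (n, k) hk) (fun k hk => HM M' MM' (n, k) hk)
    (fun k l hk hl kl => (uncor n k l hk hl kl).2) eps eps0 δe.
  move=> /le_trans; apply; rewrite /K in δK; nra.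
Qed.
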